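(* Let $P$ be a finite poset. Then $A(S_N(P))=\emptyset$.
   Context: For a poset $P$, $x\prec y$ means $x<y$ with no $z$ satisfying $x<z<y$; $\mathrm{Diag}(P)$ is the set of covering pairs $(x,y)$, and $\mathrm{Inc}(P)$ the set of pairs of incomparable elements. Four elements $a,b,c,d$ form an $N$ in $P$ if $b\prec c$, $a\prec c$, $b\prec d$ and $(a,d)\in\mathrm{Inc}(P)$; $(b,c)$ is the diagonal edge of this $N$. $N_{diag}(P)$ is the set of diagonal edges of all $N$'s in $P$. $S_N(P)$ is the poset obtained from $P$ by adding one new (dummy) vertex $u$ on each edge $(b,c)\in N_{diag}(P)$ (so that $b\prec u\prec c$), with the induced order. For a poset $Q$, $A(Q)$ is the set of pairs $(b,c)\in\mathrm{Diag}(Q)\setminus N_{diag}(Q)$ for which there exist $a,d\in Q$ with $a<c$, $b<d$, $(a,b),(c,d)\in\mathrm{Inc}(Q)$, and either $(a,c)\in N_{diag}(Q)$ or $(b,d)\in N_{diag}(Q)$. *)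

From mathcomp Require Import all_boot.
Set Implicit Arguments. Unset Strict Implicit. Unset Printing Implicit Defensive.

Definition is_porder (T : finType) (le : rel T) : Prop :=
  [/\ reflexive le, antisymmetric le & transitive le].

Section PosetNotions.
Variables (T : finType) (le : rel T).

Definition plt (x y : T) : bool := (x != y) && le x y.

Definition covers (x y : T) : bool :=
  plt x y && [forall z, ~~ (plt x z && plt z y)].

Definition incomp (x y : T) : bool := ~~ le x y && ~~ le y x.

Definition isN (a b c d : T) : bool :=
  [&& covers b c, covers a c, covers b d & incomp a d].

Definition Ndiag (b c : T) : bool := [exists a, exists d, isN a b c d].

Definition Aset (b c : T) : bool :=
  [&& covers b c, ~~ Ndiag b c &
      [exists a, exists d,
         [&& plt a c, plt b d, incomp a b, incomp c d &
             Ndiag a c || Ndiag b d]]].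

End PosetNotions.

Section Subdivision.
Variables (T : finType) (le : rel T).

(* dummy vertices: one per diagonal edge of an N *)
Definition dummy := {p : T * T | Ndiag le p.1 p.2}.

Definition SN_carrier : finType := (T + dummy)%type.

(* induced order: the dummy vertex u on (b,c) satisfies b < u < c and
   the order is the transitive closure *)
Definition SN_le (x y : SN_carrier) : bool :=
  match x, y with
  | inl x, inl y => le x y
  | inl x, inr v => le x (val v).1
  | inr u, inl y => le (val u).2 y
  | inr u, inr v => (u == v) || le (val u).2 (val v).1
  end.

End Subdivision.

From mathcomp Require Import all_boot.
Set Implicit Arguments. Unset Strict Implicit. Unset Printing Implicit Defensive.

(* A pair of A(Q) is witnessed either by (a,c) or by (b,d) in N_diag(Q); the
   second case is the first one for the dual order, and S_N commutes with
   duality, so only the first case must be excluded for Q = S_N(P).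
   In any finite poset, if the cover b < c is not an N-diagonal, everything
   below c lies below every upper cover of b.  In Q a dummy vertex has a
   single upper and a single lower cover, so it is never an endpoint of an
   N-diagonal, and b is not a dummy since otherwise c <= d.  Hence a, b, c are
   vertices of P and a < c is a cover of P that is not an N-diagonal of P;
   this makes every upper cover e of a in P an upper cover of b in Q.  Take an
   N of Q with diagonal (a,c), a' < c and a < d'.  If d' is a vertex of P it
   is such an e, so a' <= d'.  Otherwise d' is the dummy vertex of an
   N-diagonal (a,e) of P, with an N of P through x < e and a < z; since b < e
   is not an N-diagonal of P, x < c, and then x <= z as z is an upper cover
   of b in Q. *)

Section Poset.
Variables (T : finType) (le : rel T).
Hypothesis le_porder : is_porder le.

Lemma lexx x : le x x. Proof. by case: le_porder. Qed.

Lemma le_anti x y : le x y -> le y x -> x = y.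
Proof. by case: le_porder => _ anti _ xy yx; apply: anti; rewrite xy yx. Qed.

Lemma le_trans x y z : le x y -> le y z -> le x z.
Proof. by case: le_porder => _ _ tr; apply: tr. Qed.

Lemma plt_le x y : plt le x y -> le x y. Proof. by case/andP. Qed.

Lemma pltxx x : plt le x x = false. Proof. by rewrite /plt eqxx. Qed.

Lemma plt_le_trans x y z : plt le x y -> le y z -> plt le x z.
Proof.
case/andP=> neq_xy le_xy le_yz; apply/andP; split; last exact: le_trans le_xy le_yz.
by apply: contra_neq neq_xy => eq_xz; rewrite eq_xz in le_xy *; exact: le_anti le_xy le_yz.
Qed.

Lemma le_plt_trans x y z : le x y -> plt le y z -> plt le x z.
Proof.
move=> le_xy /andP[neq_yz le_yz]; apply/andP; split; last exact: le_trans le_xy le_yz.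
by apply: contra_neq neq_yz => eq_xz; rewrite -eq_xz in le_yz *; exact: le_anti le_yz le_xy.
Qed.

Lemma plt_nge x y : plt le x y -> ~~ le y x.
Proof. by move=> lt_xy; apply/negP => /(plt_le_trans lt_xy); rewrite pltxx. Qed.

Lemma covers_plt x y : covers le x y -> plt le x y. Proof. by case/andP. Qed.

Lemma covers_between x y z : covers le x y -> plt le x z -> plt le z y -> False.
Proof. by case/andP=> _ /forallP/(_ z)/negP gap xz zy; apply: gap; rewrite xz zy. Qed.

Lemma coversI x y :
  plt le x y -> (forall z, plt le x z -> plt le z y -> False) -> covers le x y.
Proof.
move=> xy gap; rewrite /covers xy; apply/forallP => z.
by apply/negP => /andP[]; apply: gap.
Qed.

Lemma NdiagP b c : reflect (exists a d, isN le a b c d) (Ndiag le b c).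
Proof.
apply: (iffP existsP) => [[a /existsP[d N]] | [a [d N]]]; first by exists a, d.
by exists a; apply/existsP; exists d.
Qed.

Lemma nNdiag_comparable a b c d :
  ~~ Ndiag le b c -> covers le b c -> covers le a c -> covers le b d ->
  le a d || le d a.
Proof.
move=> nN bc ac bd; apply: contraNT nN => inc; apply/NdiagP; exists a, d.
by rewrite /isN bc ac bd /incomp -negb_or.
Qed.

Lemma Ndiag_covers b c : Ndiag le b c -> covers le b c.
Proof. by case/NdiagP=> a [d /and4P[]]. Qed.

Definition nbelow y := #|[pred w | plt le w y]|.

Lemma nbelow_mono x y : plt le x y -> nbelow x < nbelow y.
Proof.
move=> xy; apply: proper_card; apply/properP; split; last by exists x; rewrite !inE ?pltxx.
by apply/subsetP => w; rewrite !inE => wx; apply: plt_le_trans wx (plt_le xy).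
Qed.

Lemma exists_covers_le x z : plt le x z -> exists2 y, covers le x y & le y z.
Proof.
move=> xz; have zP : plt le x z && le z z by rewrite xz lexx.
case: (@arg_minnP _ z (fun y => plt le x y && le y z) nbelow zP) => y /andP[xy yz] min_y.
exists y => //.
apply: coversI => // w xw wy.
have := min_y w; rewrite xw (le_trans (plt_le wy) yz) => /(_ isT).
by rewrite leqNgt nbelow_mono.
Qed.

Lemma exists_le_covers x z : plt le x z -> exists2 y, le x y & covers le y z.
Proof.
move=> xz; have xP : le x x && plt le x z by rewrite xz lexx.
case: (@arg_maxnP _ x (fun y => le x y && plt le y z) nbelow xP) => y /andP[xy yz] max_y.
exists y => //.
apply: coversI => // w yw wz.
have := max_y w; rewrite wz (le_trans xy (plt_le yw)) => /(_ isT) /=.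
by rewrite leqNgt nbelow_mono.
Qed.

Lemma covers_eq_top x y z : covers le x z -> plt le x y -> le y z -> y = z.
Proof.
move=> xz xy yz; case: (eqVneq y z) => // neq_yz.
by case: (covers_between xz xy); apply/andP.
Qed.

Lemma covers_eq_bot x y z : covers le x z -> le x y -> plt le y z -> y = x.
Proof.
move=> xz xy yz; case: (eqVneq y x) => // neq_yx.
by case: (covers_between xz _ yz); rewrite /plt eq_sym neq_yx.
Qed.

Lemma nNdiag_le_cover b c x y :
  covers le b c -> ~~ Ndiag le b c -> plt le x c -> covers le b y -> le x y.
Proof.
move=> bc nN xc bby; have [x' xx' x'c] := exists_le_covers xc.
case/orP: (nNdiag_comparable nN bc x'c bby) => [x'y | yx']; first exact: le_trans xx' x'y.
by case: (covers_between bc (covers_plt bby) (le_plt_trans yx' (covers_plt x'c))).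
Qed.

End Poset.

Definition Aset_left_empty (T : finType) (R : rel T) : Prop :=
  forall a b c d, covers R b c -> ~~ Ndiag R b c -> plt R a c -> plt R b d ->
  incomp R a b -> incomp R c d -> Ndiag R a c -> False.

Section Subdivision.
Variables (T : finType) (le : rel T).
Hypothesis le_porder : is_porder le.
Local Notation Q := (@SN_le T le).

Definition SN_lo (x : SN_carrier le) : T :=
  match x with inl t => t | inr u => (val u).1 end.

Definition SN_hi (x : SN_carrier le) : T :=
  match x with inl t => t | inr u => (val u).2 end.

Lemma SN_leE x y : Q x y = (x == y) || le (SN_hi x) (SN_lo y).
Proof.
case: x y => [x|u] [y|v] //=.
by case: eqP => [[->]|]; rewrite ?(lexx le_porder).
Qed.

Lemma SN_lo_le_hi x : le (SN_lo x) (SN_hi x).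
Proof.
case: x => [x|u] /=; first exact: lexx.
exact/plt_le/covers_plt/Ndiag_covers/(valP u).
Qed.

Lemma dummy_gap (u : dummy le) x : le (val u).2 x -> le x (val u).1 -> False.
Proof.
move=> ux xu; have := plt_nge le_porder (covers_plt (Ndiag_covers (valP u))).
by case/negP; exact (le_trans le_porder ux xu).
Qed.

Lemma SN_porder : is_porder Q.
Proof.
split.
- by move=> x; rewrite SN_leE eqxx.
- move=> x y; rewrite !SN_leE; case: eqVneq => //= neq_xy /andP[xy yx]; exfalso.
  case: x y neq_xy xy yx => [x|u] [y|v] //= neq_xy xy yx.
  + by rewrite (le_anti le_porder xy yx) eqxx in neq_xy.
  + exact: dummy_gap yx xy.
  + exact: dummy_gap xy yx.
  + exact: dummy_gap xy (le_trans le_porder (SN_lo_le_hi (inr v)) yx).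
- move=> y x z; rewrite !SN_leE.
  case: (eqVneq x y) => [-> //| _] /= xy; case: (eqVneq y z) => [<- | _] /= yz.
    by rewrite xy orbT.
  by rewrite (le_trans le_porder xy (le_trans le_porder (SN_lo_le_hi y) yz)) orbT.
Qed.

Lemma plt_SN_inl x y : plt Q (inl x) (inl y) = plt le x y.
Proof. by []. Qed.

Lemma covers_SN_inr_l u y : covers Q (inr u) y -> y = inl (val u).2.
Proof.
move=> uy; have /andP[neq_uy le_uy] := covers_plt uy.
symmetry; apply: (covers_eq_top uy); first by rewrite /plt /= (lexx le_porder).
by move: le_uy; rewrite !SN_leE (negbTE neq_uy) /= => ->; rewrite orbT.
Qed.

Lemma covers_SN_inr_r x v : covers Q x (inr v) -> x = inl (val v).1.
Proof.
move=> xv; have /andP[neq_xv le_xv] := covers_plt xv.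
symmetry; apply: (covers_eq_bot xv); last by rewrite /plt /= (lexx le_porder).
by move: le_xv; rewrite !SN_leE (negbTE neq_xv) /= => ->; rewrite orbT.
Qed.

Lemma covers_SN_inl x y : covers Q (inl x) (inl y) -> covers le x y /\ ~~ Ndiag le x y.
Proof.
move=> xy; split.
  apply: coversI => [|z xz zy]; first by rewrite -plt_SN_inl covers_plt.
  by apply: (covers_between xy (z := inl z)); rewrite plt_SN_inl.
apply/negP => N; pose u : dummy le := exist _ (x, y) N.
by apply: (covers_between xy (z := inr u)); rewrite /plt /= (lexx le_porder).
Qed.

Lemma Ndiag_SN_inr_l u y : Ndiag Q (inr u) y = false.
Proof.
apply/NdiagP => [[a [d /and4P[uy ay ud /andP[/negP nad _]]]]]; apply: nad.
by rewrite (covers_SN_inr_l ud) -(covers_SN_inr_l uy) plt_le ?covers_plt.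
Qed.

Lemma Ndiag_SN_inr_r x v : Ndiag Q x (inr v) = false.
Proof.
apply/NdiagP => [[a [d /and4P[xv av xd /andP[/negP nad _]]]]]; apply: nad.
by rewrite (covers_SN_inr_r av) -(covers_SN_inr_r xv) plt_le ?covers_plt.
Qed.

Section CommonTop.
Variables a b c : T.
Hypotheses (bc : covers Q (inl b) (inl c)) (nNbc : ~~ Ndiag Q (inl b) (inl c)).
Hypotheses (ac : covers le a c) (nNac : ~~ Ndiag le a c) (ab : incomp le a b).

Lemma plt_upper_cover e : covers le a e -> plt le b e.
Proof.
move=> ae; have [bcP _] := covers_SN_inl bc; have /andP[nab nba] := ab.
case/orP: (nNdiag_comparable nNac ac bcP ae) => [be | eb].
  by rewrite /plt be andbT; apply: contraNneq nab => ->; apply/plt_le/covers_plt.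
by case/negP: nab; exact (le_trans le_porder (plt_le (covers_plt ae)) eb).
Qed.

Lemma covers_SN_upper_cover e : covers le a e -> covers Q (inl b) (inl e).
Proof.
move=> ae; have be : plt Q (inl b) (inl e) by rewrite plt_SN_inl plt_upper_cover.
have [y cby ye] := exists_covers_le SN_porder be.
have ac' : plt Q (inl a) (inl c) by rewrite plt_SN_inl covers_plt.
have ay := nNdiag_le_cover SN_porder bc nNbc ac' cby.
have /andP[nab nba] := ab.
case: y cby ye ay => [y|v] cby ye ay; last first.
  by case/negP: nab; case: (covers_SN_inr_r cby) => ->.
suff <- : y = e by [].
apply: covers_eq_top ae _ ye; apply/andP; split=> //.
by apply: contraNneq nba => ->; exact (plt_le (covers_plt cby)).
Qed.

Lemma SN_Ndiag_common_top : ~~ Ndiag Q (inl a) (inl c).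
Proof.
apply/NdiagP => -[a' [d' /and4P[_ a'c ad' /andP[/negP na'd' _]]]].
case: d' ad' na'd' => [e|w] ad' na'd'.
  case: na'd'; have [ae _] := covers_SN_inl ad'.
  exact (nNdiag_le_cover SN_porder bc nNbc (covers_plt a'c) (covers_SN_upper_cover ae)).
set e := (val w).2; have [a_w] := covers_SN_inr_r ad'.
have /NdiagP[x [z /and4P[ae xe az /andP[/negP nxz _]]]] : Ndiag le a e.
  by rewrite a_w; exact: (valP w).
have [be nNbe] := covers_SN_inl (covers_SN_upper_cover ae).
have [bcP _] := covers_SN_inl bc.
have ce_false : plt le c e -> False := covers_between ae (covers_plt ac).
have xc : plt le x c.
  case/orP: (nNdiag_comparable nNbe be xe bcP) => [xc | cx].
    by rewrite /plt xc andbT; apply/eqP => x_c; apply: ce_false; rewrite -x_c covers_plt.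
  by case: ce_false; exact (le_plt_trans le_porder cx (covers_plt xe)).
have xc' : plt Q (inl x) (inl c) by [].
by case: nxz; exact (nNdiag_le_cover SN_porder bc nNbc xc' (covers_SN_upper_cover az)).
Qed.

End CommonTop.

Lemma SN_Aset_left_empty : Aset_left_empty Q.
Proof.
move=> a b c d bc nNbc _ bd ab cd Nac.
case: a ab Nac => [a|u] ab Nac; last by rewrite Ndiag_SN_inr_l in Nac.
case: c bc nNbc cd Nac => [c|v] bc nNbc cd Nac; last by rewrite Ndiag_SN_inr_r in Nac.
have [ac nNac] := covers_SN_inl (Ndiag_covers Nac).
case: b bc nNbc bd ab => [b|v] bc nNbc bd ab.
  by case/negP: (SN_Ndiag_common_top bc nNbc ac nNac ab).
have [y vy yd] := exists_covers_le SN_porder bd.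
by case/andP: cd => /negP[]; rewrite (covers_SN_inr_l bc) -(covers_SN_inr_l vy).
Qed.

End Subdivision.

Definition converse (T : Type) (R : rel T) : rel T := fun x y => R y x.

Section Converse.
Variables (T : finType) (R : rel T).

Lemma porder_converse : is_porder R -> is_porder (converse R).
Proof.
case=> refl anti trans; split=> // [x y xy | y x z xy yz]; first by apply: anti; rewrite andbC.
exact: trans yz xy.
Qed.

Lemma plt_converse x y : plt (converse R) x y = plt R y x.
Proof. by rewrite /plt eq_sym. Qed.

Lemma covers_converse x y : covers (converse R) x y = covers R y x.
Proof.
rewrite /covers plt_converse; congr (_ && _).
by apply: eq_forallb => z; rewrite !plt_converse andbC.
Qed.

Lemma incomp_converse x y : incomp (converse R) x y = incomp R y x.
Proof. by []. Qed.

Lemma Ndiag_converse x y : Ndiag (converse R) x y = Ndiag R y x.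
Proof.
apply/NdiagP/NdiagP => -[a [d]]; rewrite /isN ?covers_converse ?incomp_converse.
  by case/and4P=> h1 h2 h3 h4; exists d, a; rewrite /isN h1 h2 h3 h4.
by case/and4P=> h1 h2 h3 h4; exists d, a; rewrite /isN !covers_converse incomp_converse h1 h2 h3 h4.
Qed.

Lemma Aset_empty :
  Aset_left_empty R -> Aset_left_empty (converse R) -> forall b c, ~~ Aset R b c.
Proof.
move=> left right b c; apply/and3P => -[bc nNbc /existsP[a /existsP[d]]].
case/and5P=> ac bd ab cd /orP[Nac | Nbd]; first exact: left ac bd ab cd Nac.
by apply: (right d c b a); rewrite ?covers_converse ?Ndiag_converse ?plt_converse.
Qed.

End Converse.

Section Isomorphism.
Variables (T1 T2 : finType) (R1 : rel T1) (R2 : rel T2) (f : T1 -> T2).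
Hypotheses (f_bij : bijective f) (f_mono : forall x y, R2 (f x) (f y) = R1 x y).

Lemma plt_iso x y : plt R2 (f x) (f y) = plt R1 x y.
Proof. by rewrite /plt f_mono (bij_eq f_bij). Qed.

Lemma covers_iso x y : covers R2 (f x) (f y) = covers R1 x y.
Proof.
rewrite /covers plt_iso; congr (_ && _); apply/forallP/forallP => gap z.
  by rewrite -!plt_iso.
by case: f_bij => g _ gK; rewrite -(gK z) !plt_iso.
Qed.

Lemma Ndiag_iso x y : Ndiag R2 (f x) (f y) = Ndiag R1 x y.
Proof.
case: f_bij => g fK gK.
apply/NdiagP/NdiagP => -[a [d]].
  rewrite -(gK a) -(gK d) /isN !covers_iso /incomp !f_mono => N.
  by exists (g a), (g d).
by rewrite /isN => N; exists (f a), (f d); rewrite /isN !covers_iso /incomp !f_mono.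
Qed.

Lemma Aset_left_empty_iso : Aset_left_empty R1 -> Aset_left_empty R2.
Proof.
case: f_bij => g _ gK H a b c d.
rewrite -(gK a) -(gK b) -(gK c) -(gK d) !covers_iso !Ndiag_iso !plt_iso /incomp !f_mono.
exact: H.
Qed.

End Isomorphism.

Lemma Ndiag_dummy_converse (T : finType) (le : rel T) (u : dummy (converse le)) :
  Ndiag le (val u).2 (val u).1.
Proof. by rewrite -Ndiag_converse; exact: valP u. Qed.

Definition dummy_converse (T : finType) (le : rel T) (u : dummy (converse le)) : dummy le :=
  exist _ ((val u).2, (val u).1) (Ndiag_dummy_converse u).

Lemma dummy_converseK (T : finType) (le : rel T) :
  cancel (@dummy_converse T le) (@dummy_converse T (converse le)).
Proof. by case=> [[x y] N]; apply: val_inj. Qed.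

Definition SN_converse (T : finType) (le : rel T) (x : SN_carrier (converse le)) :
    SN_carrier le :=
  match x with inl t => inl t | inr u => inr (dummy_converse u) end.

Lemma SN_converseK (T : finType) (le : rel T) :
  cancel (@SN_converse T le) (@SN_converse T (converse le)).
Proof. by case=> [t|u] //=; rewrite dummy_converseK. Qed.

Lemma SN_converse_bij (T : finType) (le : rel T) : bijective (@SN_converse T le).
Proof. by exists (@SN_converse T (converse le)); apply: SN_converseK. Qed.

Lemma SN_converse_mono (T : finType) (le : rel T) x y :
  converse (@SN_le T le) (SN_converse x) (SN_converse y) = @SN_le T (converse le) x y.
Proof.
case: x y => [x|u] [y|v] //=; rewrite /converse /=.
by rewrite (inj_eq (can_inj (@dummy_converseK T le))) eq_sym.
Qed.

Theorem lemma4 (T : finType) (le : rel T) :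
  is_porder le ->
  forall x y : SN_carrier le, ~~ Aset (@SN_le T le) x y.
Proof.
move=> le_porder; apply: Aset_empty; first exact: SN_Aset_left_empty.
apply: Aset_left_empty_iso (@SN_converse_bij T le) (@SN_converse_mono T le) _.
exact: SN_Aset_left_empty (porder_converse le_porder).
Qed.
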